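(* Let $n\geq 3$ and let $W\subseteq\operatorname{Sym}^3\mathbb{K}^n$ be a two-dimensional linear space (pencil) of cubic forms such that for every $f\in W$ there exist linear forms $x,y$ with $f\in\operatorname{Sym}^3\langle x,y\rangle$. Then either there is a single two-dimensional space of linear forms $\langle x,y\rangle$ with $W\subseteq \operatorname{Sym}^3\langle x,y\rangle$ (all cubics in $W$ depend on the same set of $2$ variables), or $W=\langle x^2y,\,x^2z\rangle$ for some linearly independent linear forms $x,y,z$.
   Context: $\mathbb{K}$ is an algebraically closed field of characteristic zero; $\operatorname{Sym}^3\mathbb{K}^n$ is identified with the space of cubic forms in $n$ variables. *)

From HB Require Import structures.
From mathcomp Require Import all_boot all_order all_algebra.
From mathcomp Require Import mpoly.
Set Implicit Arguments. Unset Strict Implicit. Unset Printing Implicit Defensive.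
Import GRing.Theory.
Local Open Scope ring_scope.

(* Cubic forms in n variables over K: elements of {mpoly K[n]} that are
   3-homogeneous; linear forms: 1-homogeneous elements. *)

Definition in_sym3 (K : fieldType) (n : nat) (x y f : {mpoly K[n]}) : Prop :=
  exists c0 c1 c2 c3 : K,
    f = c0 *: (x ^+ 3) + c1 *: (x ^+ 2 * y) + c2 *: (x * y ^+ 2) + c3 *: (y ^+ 3).

Definition lin_indep2 (K : fieldType) (n : nat) (u v : {mpoly K[n]}) : Prop :=
  forall a b : K, a *: u + b *: v = 0 -> a = 0 /\ b = 0.

Definition lin_indep3 (K : fieldType) (n : nat) (u v w : {mpoly K[n]}) : Prop :=
  forall a b c : K, a *: u + b *: v + c *: w = 0 -> [/\ a = 0, b = 0 & c = 0].

Definition in_span2 (K : fieldType) (n : nat) (u v f : {mpoly K[n]}) : Prop :=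
  exists a b : K, f = a *: u + b *: v.

From HB Require Import structures.
From mathcomp Require Import all_boot all_order all_algebra.
From mathcomp Require Import mpoly.
From mathcomp Require Import ring zify.
From Stdlib Require Import Classical.
Import GRing.Theory.
Local Open Scope ring_scope.
Set Implicit Arguments. Unset Strict Implicit. Unset Printing Implicit Defensive.

(* Write [Ann g] for the space of directions [w] with [D_w g = 0].  By Euler's
   formula (characteristic 0), a cubic is a binary cubic in linear forms
   cutting out [Ann g] as soon as [Ann g] has codimension at most 2, and every
   binary cubic has such an annihilator.  The engine of the proof is that a
   form of positive degree killed by a spanning family of directions vanishes;
   e.g. if [Ann g + Ann h] is everything, then [D_w g = c D_w h] forces
   [D_w g = 0].
   Let [E = Ann f1 :&: Ann f2].  If [E] has codimension at most 2, the whole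
   pencil lives on the two forms cutting out [E].  Otherwise the sum of the
   annihilators of any two of [f1], [f2], [f1 + f2] is a hyperplane (a full sum
   would push the third annihilator into [E]).  These three hyperplanes
   coincide, since otherwise the three annihilators span and [Ann (f1 - f2)]
   falls into [E].  So all second derivatives of [f1], [f2] along the
   hyperplane [x = 0] vanish, i.e. [f_i = x^2 y_i], and either [x, y1, y2] are
   independent or [x] lies in [<y1, y2>]. *)

Section BinaryCubics.
Variables (K : fieldType) (n : nat).
Local Notation P := {mpoly K[n]}.
Implicit Types (p q r x y f g h : P).

Lemma in_sym3_span2 x y g h f :
  in_sym3 x y g -> in_sym3 x y h -> in_span2 g h f -> in_sym3 x y f.
Proof.
move=> [c0 [c1 [c2 [c3 ->]]]] [d0 [d1 [d2 [d3 ->]]]] [a [b ->]].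
exists (a * c0 + b * d0), (a * c1 + b * d1), (a * c2 + b * d2), (a * c3 + b * d3).
rewrite -!mul_mpolyC !mpolyCD !mpolyCM; ring.
Qed.

Fixpoint binary_form d x y p : Prop :=
  if d is d'.+1 then
    exists q r, [/\ binary_form d' x y q, binary_form d' x y r & p = x * q + y * r]
  else exists c : K, p = c%:MP.

Lemma binary_form3 x y p : binary_form 3 x y p -> in_sym3 x y p.
Proof.
move=> [q0 [q1 [[q00 [q01 [[q000 [q001 [[a ->] [b ->] ->]]]
  [q010 [q011 [[c ->] [d ->] ->]]] ->]]] [q10 [q11 [[q100 [q101 [[e ->] [f ->] ->]]]
  [q110 [q111 [[g ->] [h ->] ->]]] ->]]] ->]]].
exists a, (b + c + e), (d + f + g), h.
rewrite -!mul_mpolyC !mpolyCD; ring.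
Qed.

Lemma square_pencil_cases x y1 y2 :
  lin_indep2 (x ^+ 2 * y1) (x ^+ 2 * y2) ->
  lin_indep3 x y1 y2 \/
  lin_indep2 y1 y2 /\ (forall f, in_span2 (x ^+ 2 * y1) (x ^+ 2 * y2) f -> in_sym3 y1 y2 f).
Proof.
move=> f_indep; have y_indep : lin_indep2 y1 y2.
  by move=> b c bc0; apply: f_indep; rewrite !scalerAr -mulrDr bc0 mulr0.
have [|x_dep] := classic (lin_indep3 x y1 y2); [by left | right; split=> //].
have [a [b [c [abc0 abc_neq0]]]] : exists a b c : K,
    a *: x + b *: y1 + c *: y2 = 0 /\ ~ [/\ a = 0, b = 0 & c = 0].
  apply: NNPP => no_rel; apply: x_dep => a b c abc0; apply: NNPP => abc_neq0.
  by apply: no_rel; exists a, b, c.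
have [a0|a_neq0] := eqVneq a 0.
  by move: abc0; rewrite a0 scale0r add0r => /y_indep [b0 c0]; case: abc_neq0.
have xE : x = (- (a^-1 * b)) *: y1 + (- (a^-1 * c)) *: y2.
  apply: (scalerI a_neq0); rewrite scalerDr !scalerA !mulrN !mulrA mulfV // !mul1r.
  by apply/eqP; rewrite !scaleNr -opprD -addr_eq0 addrA abc0.
move: xE; set p := - (a^-1 * b); set q := - (a^-1 * c) => xE.
move=> f; apply: in_sym3_span2.
  exists (p * p), (p * q + p * q), (q * q), 0.
  by rewrite xE -!mul_mpolyC !mpolyCD !mpolyCM mpolyC0; ring.
exists 0, (p * p), (p * q + p * q), (q * q).
by rewrite xE -!mul_mpolyC !mpolyCD !mpolyCM mpolyC0; ring.
Qed.

End BinaryCubics.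

Lemma kermx_sub_of_codim (F : fieldType) n (H : 'M[F]_n) k :
  (k <= n)%N -> (n - k <= \rank H)%N ->
  exists L : 'M_(k, n), exists B : 'M_(n, k), L *m B = 1%:M /\ (kermx L^T <= H)%MS.
Proof.
move=> k_le_n rH; set S := (cokermx H)^T.
have rS : (\rank S <= k)%N by rewrite mxrank_tr mxrank_coker leq_subCl.
pose L : 'M_(k, n) := pid_mx k *m row_ebase S.
have /row_freeP [B LB] : row_free L.
  by rewrite /row_free mxrankMfree ?row_free_unit ?row_ebase_unit // rank_pid_mx.
exists L, B; split=> //; apply/rV_subP => w; rewrite sub_kermx => /eqP wL.
have SE : S = (col_ebase S *m (pid_mx (\rank S) : 'M_(n, k))) *m L.
  rewrite mulmxA -(mulmxA _ (pid_mx _)) mul_pid_mx.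
  by rewrite (minn_idPl rS) (minn_idPr rS) mulmx_ebase.
by rewrite submxE -[cokermx H]trmxK -/S SE trmx_mul mulmxA wL mul0mx.
Qed.

Section DirectionalDerivative.
Variables (K : fieldType) (n : nat).
Local Notation P := {mpoly K[n]}.
Implicit Types (p q r : P) (u w a b : 'rV[K]_n).

Definition dderiv w p : P := \sum_i w 0 i *: mderiv i p.

Definition lform a : P := \sum_i a 0 i *: 'X_i.

Fact dderiv_is_linear w : linear (dderiv w).
Proof.
move=> c p q; rewrite /dderiv scaler_sumr -big_split /=; apply: eq_bigr => i _.
by rewrite mderivD mderivZ scalerDr !scalerA mulrC.
Qed.

HB.instance Definition _ w :=
  GRing.isLinear.Build K P P _ (dderiv w) (dderiv_is_linear w).

Lemma dderivDl u w p : dderiv (u + w) p = dderiv u p + dderiv w p.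
Proof. by rewrite /dderiv -big_split; apply: eq_bigr => i _; rewrite mxE scalerDl. Qed.

Lemma dderivZl c w p : dderiv (c *: w) p = c *: dderiv w p.
Proof. by rewrite /dderiv scaler_sumr; apply: eq_bigr => i _; rewrite mxE scalerA. Qed.

Lemma dderiv_delta i p : dderiv 'e_i p = mderiv i p.
Proof.
rewrite /dderiv (bigD1 i) //= big1 => [|j ji]; last by rewrite mxE (negbTE ji) scale0r.
by rewrite mxE !eqxx scale1r addr0.
Qed.

Lemma dderiv_comm u w p : dderiv u (dderiv w p) = dderiv w (dderiv u p).
Proof.
rewrite {2 4}/dderiv !linear_sum /=.
under eq_bigr do rewrite linearZ /= /dderiv scaler_sumr.
under [RHS]eq_bigr do rewrite linearZ /= /dderiv scaler_sumr.
rewrite exchange_big; apply: eq_bigr => i _; apply: eq_bigr => j _.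
by rewrite !scalerA mulrC mderiv_comm.
Qed.

Lemma dderivM w p q : dderiv w (p * q) = dderiv w p * q + p * dderiv w q.
Proof.
rewrite /dderiv mulr_suml mulr_sumr -big_split /=; apply: eq_bigr => i _.
by rewrite mderivM scalerDr -scalerAl -scalerAr.
Qed.

Lemma mderivXU i j : mderiv i ('X_j : P) = (j == i)%:R%:MP.
Proof.
rewrite mderivX mnm1E; case: eqP => [->|_] /=; last by rewrite scale0r mpolyC0.
by rewrite -{1}(add0m U_(i)%MM) addmK mpolyX0 scale1r mpolyC1.
Qed.

Lemma dderiv_lform w a : dderiv w (lform a) = ((w *m a^T) 0 0)%:MP.
Proof.
rewrite /lform linear_sum !mxE raddf_sum /=; apply: eq_bigr => i _.
rewrite linearZ /= /dderiv (bigD1 i) //= big1 => [|j ji]; last first.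
  by rewrite mderivXU eq_sym (negbTE ji) mpolyC0 scaler0.
by rewrite mderivXU eqxx mpolyC1 addr0 mxE scalerA mulrC -mul_mpolyC mulr1.
Qed.

Fact lform_is_linear : linear lform.
Proof.
move=> c a b; rewrite /lform scaler_sumr -big_split /=; apply: eq_bigr => i _.
by rewrite !mxE scalerDl scalerA.
Qed.

HB.instance Definition _ :=
  GRing.isLinear.Build K 'rV[K]_n P _ lform lform_is_linear.

Lemma mcoeff_lform a i : (lform a)@_U_(i) = a 0 i.
Proof.
rewrite /lform raddf_sum /= (bigD1 i) //= big1 => [|j ji].
  by rewrite mcoeffZ mcoeffXU eqxx mulr1 addr0.
by rewrite mcoeffZ mcoeffXU (negbTE ji) mulr0.
Qed.

Lemma lform_inj : injective lform.
Proof.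
by move=> a b eab; apply/rowP => i; rewrite -!mcoeff_lform eab.
Qed.

Lemma lform_dhomog a : lform a \is 1.-homog.
Proof. by apply: rpred_sum => i _; rewrite rpredZ // dhomogX /= mdeg1. Qed.

Lemma dhomog1_lformE x : x \is 1.-homog -> x = lform (\row_i x@_U_(i)).
Proof.
move=> x1; apply/mpolyP => m; rewrite /lform raddf_sum /=.
under eq_bigr => i _ do rewrite mxE mcoeffZ mcoeffX.
have [/eqP/mdeg1P [i /eqP ->]|m_neq1] := eqVneq (mdeg m) 1%N.
  rewrite (bigD1 i) //= big1 => [|j ji]; last by rewrite eq_mnm1 (negbTE ji) mulr0.
  by rewrite eqxx mulr1 addr0.
rewrite (dhomog_nemf_coeff x1 m_neq1) big1 // => j _.
by case: eqP => [jm|]; [move: m_neq1; rewrite -jm mdeg1 | rewrite mulr0].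
Qed.

Lemma dhomog0_mpolyC p : p \is 0.-homog -> p = (p@_0)%:MP.
Proof.
move=> p0; apply/mpolyP => m; rewrite mcoeffC.
have [->|m_neq0] := eqVneq m 0%MM; first by rewrite mulr1.
by rewrite mulr0 (dhomog_nemf_coeff p0) // mdeg_eq0.
Qed.

Lemma mderiv_dhomog d i p : p \is d.+1.-homog -> mderiv i p \is d.-homog.
Proof.
move=> p_hom; apply/dhomogP => m; rewrite mcoeff_msupp mcoeff_deriv => pm_neq0.
have : p@_(m + U_(i)) != 0 by apply: contraNneq pm_neq0 => ->; rewrite mul0rn.
rewrite -mcoeff_msupp => /(dhomog_mf p_hom) /=; rewrite mdegD mdeg1 addn1.
by case.
Qed.

Lemma dderiv_dhomog d w p : p \is d.+1.-homog -> dderiv w p \is d.-homog.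
Proof. by move=> p_hom; apply: rpred_sum => i _; rewrite rpredZ // mderiv_dhomog. Qed.

Lemma euler_mpolyX m : \sum_i 'X_i * mderiv i ('X_[m] : P) = (mdeg m)%:R *: 'X_[m].
Proof.
rewrite mdegE natr_sum scaler_suml; apply: eq_bigr => i _.
rewrite mderivX -scalerAr -mpolyXD.
have [->|mi_gt0] := posnP (m i); first by rewrite !scale0r.
by rewrite addmC submK //; apply/mnm_lepP => k; rewrite mnm1E; case: eqP => // <-.
Qed.

Lemma euler d p : p \is d.-homog -> \sum_i 'X_i * mderiv i p = d%:R *: p.
Proof.
move=> p_hom; rewrite {1 2}(mpolyE p).
under eq_bigr => i _ do rewrite raddf_sum mulr_sumr.
rewrite exchange_big /= scaler_sumr big_seq [RHS]big_seq; apply: eq_bigr => m pm.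
under eq_bigr => i _ do rewrite mderivZ -scalerAr.
by rewrite -scaler_sumr euler_mpolyX (dhomog_mf p_hom pm) scalerA mulrC -scalerA.
Qed.

Lemma euler_lin d p a b q r : p \is d.-homog ->
  (forall i, mderiv i p = a 0 i *: q + b 0 i *: r) ->
  d%:R *: p = lform a * q + lform b * r.
Proof.
move=> p_hom dp; rewrite -(euler p_hom) /lform !mulr_suml -big_split /=.
by apply: eq_bigr => i _; rewrite dp mulrDr -!scalerAl -!scalerAr.
Qed.

Lemma dderiv_suml (I : Type) (s : seq I) (Q : pred I) (F : I -> 'rV_n) p :
  dderiv (\sum_(i <- s | Q i) F i) p = \sum_(i <- s | Q i) dderiv (F i) p.
Proof.
rewrite /dderiv; under eq_bigr do rewrite summxE scaler_suml.
by rewrite exchange_big.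
Qed.

Definition kills m (S : 'M[K]_(m, n)) p := forall w, (w <= S)%MS -> dderiv w p = 0.

Lemma kills_sub m1 m2 (S : 'M_(m1, n)) (T : 'M_(m2, n)) p :
  (T <= S)%MS -> kills S p -> kills T p.
Proof. by move=> sTS Sp w wT; apply/Sp/(submx_trans wT). Qed.

Lemma kills_adds m1 m2 (S : 'M_(m1, n)) (T : 'M_(m2, n)) p :
  kills S p -> kills T p -> kills (S + T)%MS p.
Proof.
move=> Sp Tp w /sub_addsmxP [[u v] ->]; rewrite dderivDl Sp ?Tp ?addr0 //; exact: submxMl.
Qed.

Lemma kills_dderiv m (S : 'M_(m, n)) w p : kills S p -> kills S (dderiv w p).
Proof. by move=> Sp u uS; rewrite dderiv_comm Sp // raddf0. Qed.

Lemma killsZ m (S : 'M_(m, n)) c p : kills S p -> kills S (c *: p).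
Proof. by move=> Sp w wS; rewrite linearZ /= Sp // scaler0. Qed.

Lemma kermx_split k (L : 'M_(k, n)) (B : 'M_(n, k)) w :
  L *m B = 1%:M -> (w - w *m L^T *m B^T <= kermx L^T)%MS.
Proof.
by move=> LB; rewrite sub_kermx mulmxBl -!mulmxA -trmx_mul LB trmx1 mulmx1 subrr.
Qed.

Lemma mderiv_split k (L : 'M_(k, n)) (B : 'M_(n, k)) i p :
  mderiv i p =
  \sum_j L j i *: dderiv (row j B^T) p + dderiv ('e_i - 'e_i *m L^T *m B^T) p.
Proof.
rewrite -dderiv_delta -{1}['e_i](subrK ('e_i *m L^T *m B^T)) dderivDl addrC.
rewrite mulmx_sum_row dderiv_suml; congr (_ + _); apply: eq_bigr => j _.
by rewrite dderivZl -rowE !mxE.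
Qed.

Lemma mderiv_kermx k (L : 'M_(k, n)) (B : 'M_(n, k)) i p :
  L *m B = 1%:M -> kills (kermx L^T) p ->
  mderiv i p = \sum_j L j i *: dderiv (row j B^T) p.
Proof. by move=> LB Lp; rewrite (mderiv_split L B) Lp ?addr0 // kermx_split. Qed.

Lemma kills_kermx_lform k (L : 'M_(k, n)) a : (a <= L)%MS -> kills (kermx L^T) (lform a).
Proof.
move=> /submxP [c ->] w; rewrite sub_kermx => /eqP wL.
by rewrite dderiv_lform trmx_mul mulmxA wL mul0mx mxE mpolyC0.
Qed.

Lemma kills_sym3 m (S : 'M_(m, n)) x y g :
  in_sym3 x y g -> kills S x -> kills S y -> kills S g.
Proof.
move=> [c0 [c1 [c2 [c3 ->]]]] Sx Sy w wS.
rewrite !linearD !linearZ /= !dderivM (Sx _ wS) (Sy _ wS).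
by rewrite !(mul0r, mulr0, addr0, scaler0).
Qed.

Lemma lin_indep2_lform_row (L : 'M_(2, n)) :
  row_free L -> lin_indep2 (lform (row 0 L)) (lform (row 1 L)).
Proof.
move=> L_free a b ab0; pose c : 'rV_2 := \row_j (if j == 0 then a else b).
have c0 : c = 0.
  apply: (row_free_inj L_free); rewrite mul0mx mulmx_sum_row big_ord_recl big_ord1.
  apply: lform_inj; rewrite linear0 -ab0 linearD !linearZ /= !mxE /=.
  by rewrite (_ : lift ord0 ord0 = 1) //; exact: val_inj.
by split; [move/rowP/(_ 0): c0 | move/rowP/(_ 1): c0]; rewrite !mxE.
Qed.

End DirectionalDerivative.

Section Annihilator.
Variables (K : fieldType) (n : nat).
Hypothesis char0 : [pchar K] =i pred0.
Local Notation P := {mpoly K[n]}.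
Implicit Types (p q : P) (u w : 'rV[K]_n).

Lemma natr_succ_neq0 k : k.+1%:R != 0 :> K.
Proof. by move/pcharf0P: char0 => ->. Qed.

Lemma dhomog_mderiv_eq0 d p : p \is d.+1.-homog -> (forall i, mderiv i p = 0) -> p = 0.
Proof.
move=> p_hom dp0; have := euler p_hom.
rewrite big1 => [/esym/eqP|i _]; last by rewrite dp0 mulr0.
by rewrite scaler_eq0 (negbTE (natr_succ_neq0 d)) => /eqP.
Qed.

Lemma kills_full m (S : 'M_(m, n)) d p :
  row_full S -> p \is d.+1.-homog -> kills S p -> p = 0.
Proof.
move=> S_full p_hom Sp; apply: (dhomog_mderiv_eq0 p_hom) => i.
by rewrite -dderiv_delta Sp // submx_full.
Qed.

Lemma scale_natr_succK k p q : k.+1%:R *: p = q -> p = k.+1%:R^-1 *: q.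
Proof. by move=> <-; rewrite scalerK // natr_succ_neq0. Qed.

Lemma kermx_pow_form (l : 'rV_n) (b : 'cV_n) d p :
  l *m b = 1%:M -> p \is d.-homog -> kills (kermx l^T) p ->
  exists c : K, p = c *: lform l ^+ d.
Proof.
move=> lb; elim: d p => [|d IHd] p p_hom lp.
  by exists p@_0; rewrite expr0 {1}(dhomog0_mpolyC p_hom) -mul_mpolyC mulr1.
have [c Dp] := IHd _ (dderiv_dhomog b^T p_hom) (kills_dderiv _ lp).
have E : d.+1%:R *: p = lform l * dderiv b^T p + lform 0 * 0.
  apply: euler_lin p_hom _ => i.
  by rewrite (mderiv_kermx _ lb lp) big_ord1 row_id mxE scale0r addr0.
exists (d.+1%:R^-1 * c).
by rewrite (scale_natr_succK E) mulr0 addr0 Dp -scalerAr -exprS scalerA.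
Qed.

Lemma kermx_binary_form (L : 'M_(2, n)) (B : 'M_(n, 2)) d p :
  L *m B = 1%:M -> p \is d.-homog -> kills (kermx L^T) p ->
  binary_form d (lform (row 0 L)) (lform (row 1 L)) p.
Proof.
move=> LB; elim: d p => [|d IHd] p p_hom Lp /=; first by exists p@_0; exact: dhomog0_mpolyC.
set u := row 0 B^T; set v := row 1 B^T.
have E : d.+1%:R *: p = lform (row 0 L) * dderiv u p + lform (row 1 L) * dderiv v p.
  apply: euler_lin p_hom _ => i.
  rewrite (mderiv_kermx _ LB Lp) big_ord_recl big_ord1 !mxE.
  by rewrite (_ : lift ord0 ord0 = 1) //; exact: val_inj.
exists (d.+1%:R^-1 *: dderiv u p), (d.+1%:R^-1 *: dderiv v p); split.
- by apply: IHd; rewrite ?rpredZ ?dderiv_dhomog //; apply/killsZ/kills_dderiv.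
- by apply: IHd; rewrite ?rpredZ ?dderiv_dhomog //; apply/killsZ/kills_dderiv.
- by rewrite {1}(scale_natr_succK E) scalerDr -!scalerAr.
Qed.

Lemma kermx_sq_factor (l : 'rV_n) (b : 'cV_n) g :
  l *m b = 1%:M -> g \is 3.-homog ->
  (forall w, (w <= kermx l^T)%MS -> kills (kermx l^T) (dderiv w g)) ->
  exists y, y \is 1.-homog /\ g = lform l ^+ 2 * y.
Proof.
move=> lb g_hom Hg.
pose h (i : 'I_n) : 'rV_n := 'e_i - 'e_i *m l^T *m b^T.
have h_ker i : (h i <= kermx l^T)%MS by exact: kermx_split.
have split q i : mderiv i q = l 0 i *: dderiv b^T q + dderiv (h i) q.
  by rewrite (mderiv_split l b) big_ord1 row_id.
pose Q := dderiv b^T g.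
have Q_hom : Q \is 2.-homog by exact: dderiv_dhomog.
have [c Dg] := fin_all_exists (fun i =>
  kermx_pow_form lb (dderiv_dhomog (h i) g_hom) (Hg _ (h_ker i))).
have hQ_kills i : kills (kermx l^T) (dderiv (h i) Q).
  by rewrite /Q dderiv_comm; apply/kills_dderiv/Hg.
have [c' DQ] := fin_all_exists (fun i =>
  kermx_pow_form lb (dderiv_dhomog (h i) Q_hom) (hQ_kills i)).
have E3 : 3%:R *: g = lform l * Q + lform (\row_i c i) * lform l ^+ 2.
  by apply: euler_lin g_hom _ => i; rewrite split Dg mxE.
have E2 : 2%:R *: Q = lform l * dderiv b^T Q + lform (\row_i c' i) * lform l.
  by apply: euler_lin Q_hom _ => i; rewrite split DQ mxE expr1.
exists (3%:R^-1 *: (2%:R^-1 *: (dderiv b^T Q + lform (\row_i c' i)) + lform (\row_i c i))).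
split; first by rewrite !(rpredZ, rpredD) ?lform_dhomog ?dderiv_dhomog.
by rewrite (scale_natr_succK E3) {1}(scale_natr_succK E2) -!mul_mpolyC; ring.
Qed.

(* For a cubic [g], [dderiv w g] is a quadratic form; it vanishes iff all its
   second partials, which are constants linear in [w], vanish. *)
Definition annmx g : 'M[K]_n :=
  (\bigcap_(jk : 'I_n * 'I_n)
     kermx (\col_i (mderiv jk.2 (mderiv jk.1 (mderiv i g)))@_0))%MS.

Lemma mcoeff0_mderiv2_dderiv w g j k :
  (mderiv k (mderiv j (dderiv w g)))@_0 =
  (w *m \col_i (mderiv k (mderiv j (mderiv i g)))@_0) 0 0.
Proof.
rewrite /dderiv (raddf_sum (mderiv j)) (raddf_sum (mderiv k)) !mxE raddf_sum /=.
apply: eq_bigr => i _.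
by rewrite !linearZ /= mxE.
Qed.

Lemma annmxP g : g \is 3.-homog -> forall w, reflect (dderiv w g = 0) (w <= annmx g)%MS.
Proof.
move=> g_hom w; apply: (iffP sub_bigcapmxP) => [w_ann | Dwg0 [j k] _].
  have Dwg_hom : dderiv w g \is 2.-homog by exact: dderiv_dhomog.
  apply: (dhomog_mderiv_eq0 Dwg_hom) => j.
  apply: (dhomog_mderiv_eq0 (mderiv_dhomog j Dwg_hom)) => k.
  rewrite (dhomog0_mpolyC (mderiv_dhomog k (mderiv_dhomog j Dwg_hom))).
  rewrite mcoeff0_mderiv2_dderiv; move: (w_ann (j, k) isT); rewrite sub_kermx.
  by move/eqP => ->; rewrite mxE mpolyC0.
rewrite sub_kermx; apply/eqP/rowP => i; rewrite ord1 [RHS]mxE.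
by rewrite -mcoeff0_mderiv2_dderiv Dwg0 /= !mderiv0 mcoeff0.
Qed.

Lemma kills_annmx g : g \is 3.-homog -> kills (annmx g) g.
Proof. by move=> g_hom w /(annmxP g_hom). Qed.

Lemma kills_annmx_dderiv g w : g \is 3.-homog -> kills (annmx g) (dderiv w g).
Proof. by move=> g_hom; apply/kills_dderiv/kills_annmx. Qed.

Lemma mxrank_annmx_sym3 g x y : g \is 3.-homog ->
  x \is 1.-homog -> y \is 1.-homog -> in_sym3 x y g -> (n - 2 <= \rank (annmx g))%N.
Proof.
move=> g_hom /dhomog1_lformE xE /dhomog1_lformE yE gxy.
set a := \row_i x@_U_(i) in xE; set b := \row_i y@_U_(i) in yE.
set L := col_mx a b.
have rL : (n - 2 <= \rank (kermx L^T))%N.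
  by rewrite mxrank_ker mxrank_tr leq_sub2l // rank_leq_row.
apply: leq_trans rL (mxrankS _); apply/rV_subP => w wL; apply/(annmxP g_hom).
apply: (kills_sym3 gxy) wL.
  by rewrite xE; apply: kills_kermx_lform; rewrite -addsmxE addsmxSl.
by rewrite yE; apply: kills_kermx_lform; rewrite -addsmxE addsmxSr.
Qed.

Lemma dderiv_proportional_eq0 g h c w : g \is 3.-homog -> h \is 3.-homog ->
  row_full (annmx g + annmx h) -> dderiv w g = c *: dderiv w h -> dderiv w g = 0.
Proof.
move=> g_hom h_hom gh_full Dgh; apply: (kills_full gh_full (dderiv_dhomog w g_hom)).
apply: kills_adds; first exact: kills_annmx_dderiv.
by rewrite Dgh; apply/killsZ/kills_annmx_dderiv.
Qed.

Lemma dderiv_eq_eq0_full g h w : g \is 3.-homog -> h \is 3.-homog ->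
  row_full (annmx g + annmx h + annmx (g + h)) ->
  dderiv w g = dderiv w h -> dderiv w g = 0.
Proof.
move=> g_hom h_hom full Dgh; apply: (kills_full full (dderiv_dhomog w g_hom)).
apply: kills_adds; first apply: kills_adds.
- exact: kills_annmx_dderiv.
- by rewrite Dgh; apply: kills_annmx_dderiv.
- move=> u /(annmxP (rpredD g_hom h_hom)) Du.
  have : dderiv u (dderiv w (g + h)) = 0 by rewrite dderiv_comm Du raddf0.
  rewrite linearD /= -Dgh linearD /= -mulr2n -scaler_nat => /eqP.
  by rewrite scaler_eq0 (negbTE (natr_succ_neq0 1)) => /eqP.
Qed.

Section AnnihilatorTriple.
Variables (g h k : P) (a b : K).
Hypotheses (g_hom : g \is 3.-homog) (h_hom : h \is 3.-homog).
Hypotheses (a_neq0 : a != 0) (b_neq0 : b != 0) (kE : k = a *: g + b *: h).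

Let k_hom : k \is 3.-homog.
Proof. by rewrite kE rpredD ?rpredZ. Qed.

Lemma capmx_annmx_sub : (annmx g :&: annmx h <= annmx k)%MS.
Proof.
apply/rV_subP => w; rewrite sub_capmx => /andP [/(annmxP g_hom) Dg /(annmxP h_hom) Dh].
by apply/(annmxP k_hom); rewrite kE linearD !linearZ /= Dg Dh !scaler0 addr0.
Qed.

Lemma annmx_sub_capmx : row_full (annmx g + annmx h) -> (annmx k <= annmx g :&: annmx h)%MS.
Proof.
move=> gh_full; apply/rV_subP => w /(annmxP k_hom); rewrite kE linearD !linearZ /= => Dk.
have Dg : dderiv w g = (- (a^-1 * b)) *: dderiv w h.
  apply: (scalerI a_neq0); rewrite scalerA mulrN mulrA mulfV // mul1r scaleNr.
  by apply/eqP; rewrite -addr_eq0 Dk.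
have Dg0 := dderiv_proportional_eq0 g_hom h_hom gh_full Dg.
have /eqP : b *: dderiv w h = 0 by rewrite -Dk Dg0 scaler0 add0r.
rewrite scaler_eq0 (negbTE b_neq0) => /eqP Dh0.
by rewrite sub_capmx; apply/andP; split; apply/annmxP.
Qed.

Lemma mxrank_adds_annmx : (3 <= n)%N ->
  (n - 2 <= \rank (annmx g))%N -> (n - 2 <= \rank (annmx h))%N ->
  (n - 2 <= \rank (annmx k))%N -> (\rank (annmx g :&: annmx h) <= n - 3)%N ->
  \rank (annmx g + annmx h) = (n - 1)%N.
Proof.
move=> n3 rg rh rk rgh.
have : ~~ row_full (annmx g + annmx h).
  by apply/negP => /annmx_sub_capmx/mxrankS; move: rk rgh n3; lia.
have := mxrank_sum_cap (annmx g) (annmx h); have := rank_leq_col (annmx g + annmx h)%MS.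
by rewrite /row_full; move: rg rh rgh n3; lia.
Qed.

Lemma kills_adds_annmx_dderiv w : (annmx g + annmx h <= annmx k + annmx g)%MS ->
  (w <= annmx g + annmx h)%MS -> kills (annmx g + annmx h)%MS (dderiv w g).
Proof.
move=> sub /sub_addsmxP [[x1 x2] /= ->].
set v1 := x1 *m annmx g; set v2 := x2 *m annmx h.
have Dv1 : dderiv v1 g = 0 by apply/(annmxP g_hom)/submxMl.
have Dv2 : dderiv v2 h = 0 by apply/(annmxP h_hom)/submxMl.
have E : dderiv (v1 + v2) g = a^-1 *: dderiv v2 k.
  by rewrite dderivDl Dv1 add0r kE linearD !linearZ /= Dv2 scaler0 addr0 scalerA mulVf ?scale1r.
apply: (kills_sub sub); apply: kills_adds; last exact: kills_annmx_dderiv.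
by rewrite E; apply/killsZ; exact: kills_annmx_dderiv k_hom.
Qed.

Lemma kermx_sub_sq_factor (l : 'rV_n) (r : 'cV_n) :
  l *m r = 1%:M -> (kermx l^T <= annmx g + annmx h)%MS ->
  (annmx g + annmx h <= annmx k + annmx g)%MS ->
  exists y, y \is 1.-homog /\ g = lform l ^+ 2 * y.
Proof.
move=> lr lH sub; apply: (kermx_sq_factor lr g_hom) => w /submx_trans/(_ lH) wH.
exact: kills_sub lH (kills_adds_annmx_dderiv sub wH).
Qed.

End AnnihilatorTriple.

End Annihilator.

Definition common_binary_support (K : fieldType) n (f1 f2 : {mpoly K[n]}) : Prop :=
  exists x y : {mpoly K[n]},
    [/\ x \is 1.-homog, y \is 1.-homog, lin_indep2 x y &
        forall f, in_span2 f1 f2 f -> in_sym3 x y f].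

Definition square_pencil (K : fieldType) n (f1 f2 : {mpoly K[n]}) : Prop :=
  exists x y z : {mpoly K[n]},
    [/\ x \is 1.-homog, y \is 1.-homog, z \is 1.-homog, lin_indep3 x y z &
        forall f, in_span2 f1 f2 f <-> in_span2 (x ^+ 2 * y) (x ^+ 2 * z) f].

Section Pencil.
Variables (K : fieldType) (n : nat) (f1 f2 : {mpoly K[n]}).
Hypotheses (char0 : [pchar K] =i pred0) (n3 : (3 <= n)%N).
Hypotheses (f1_hom : f1 \is 3.-homog) (f2_hom : f2 \is 3.-homog) (f_indep : lin_indep2 f1 f2).
Hypothesis pencil_binary : forall f, in_span2 f1 f2 f ->
  exists x y : {mpoly K[n]}, [/\ x \is 1.-homog, y \is 1.-homog & in_sym3 x y f].

Local Notation A1 := (annmx f1).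
Local Notation A2 := (annmx f2).
Local Notation A3 := (annmx (f1 + f2)).
Local Notation A4 := (annmx (f1 - f2)).

Let span1 : in_span2 f1 f2 f1. Proof. by exists 1, 0; rewrite scale1r scale0r addr0. Qed.
Let span2 : in_span2 f1 f2 f2. Proof. by exists 0, 1; rewrite scale1r scale0r add0r. Qed.
Let span3 : in_span2 f1 f2 (f1 + f2). Proof. by exists 1, 1; rewrite !scale1r. Qed.
Let span4 : in_span2 f1 f2 (f1 - f2). Proof. by exists 1, (-1); rewrite scale1r scaleN1r. Qed.

Lemma span_dhomog f : in_span2 f1 f2 f -> f \is 3.-homog.
Proof. by move=> [a [b ->]]; rewrite rpredD ?rpredZ. Qed.

Lemma mxrank_annmx_span f : in_span2 f1 f2 f -> (n - 2 <= \rank (annmx f))%N.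
Proof.
move=> f_span; have [x [y [x_hom y_hom fxy]]] := pencil_binary f_span.
exact: (mxrank_annmx_sym3 char0 (span_dhomog f_span) x_hom y_hom fxy).
Qed.

Lemma common_binary_of_mxrank :
  (n - 2 <= \rank (A1 :&: A2))%N -> common_binary_support f1 f2.
Proof.
move=> rE; have [L [B [LB LE]]] := kermx_sub_of_codim (k := 2) (ltnW n3) rE.
have sym3 f : f \is 3.-homog -> (A1 :&: A2 <= annmx f)%MS ->
    in_sym3 (lform (row 0 L)) (lform (row 1 L)) f.
  move=> f_hom Ef; apply/binary_form3/(kermx_binary_form char0 LB f_hom).
  exact: kills_sub (submx_trans LE Ef) (kills_annmx char0 f_hom).
exists (lform (row 0 L)), (lform (row 1 L)); split; rewrite ?lform_dhomog //.
  by apply: lin_indep2_lform_row; apply/row_freeP; exists B.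
by move=> f; apply: in_sym3_span2; apply: sym3; rewrite ?capmxSl ?capmxSr.
Qed.

Section SmallCommonAnnihilator.
Hypothesis rE : (\rank (A1 :&: A2) <= n - 3)%N.

Lemma mxrank_adds_pencil g h k a b :
  in_span2 f1 f2 g -> in_span2 f1 f2 h -> in_span2 f1 f2 k ->
  a != 0 -> b != 0 -> k = a *: g + b *: h -> (annmx g :&: annmx h <= A1 :&: A2)%MS ->
  \rank (annmx g + annmx h) = (n - 1)%N.
Proof.
move=> gW hW kW a_neq0 b_neq0 kE ghE.
apply: (mxrank_adds_annmx char0 (span_dhomog gW) (span_dhomog hW) a_neq0 b_neq0 kE n3);
  rewrite ?mxrank_annmx_span //.
exact: leq_trans (mxrankS ghE) rE.
Qed.

Lemma mxrank_adds12 : \rank (A1 + A2) = (n - 1)%N.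
Proof. by apply: (mxrank_adds_pencil span1 span2 span3 (oner_neq0 K) (oner_neq0 K)); rewrite ?scale1r. Qed.

Lemma mxrank_adds31 : \rank (A3 + A1) = (n - 1)%N.
Proof.
have kE : f2 = 1 *: (f1 + f2) + (-1) *: f1 by rewrite scale1r scaleN1r addrAC subrr add0r.
apply: (mxrank_adds_pencil span3 span1 span2 (oner_neq0 K) _ kE).
  by rewrite oppr_eq0 oner_eq0.
rewrite sub_capmx capmxSr /=; exact: (capmx_annmx_sub char0 (span_dhomog span3) f1_hom kE).
Qed.

Lemma mxrank_adds32 : \rank (A3 + A2) = (n - 1)%N.
Proof.
have kE : f1 = 1 *: (f1 + f2) + (-1) *: f2 by rewrite scale1r scaleN1r addrK.
apply: (mxrank_adds_pencil span3 span2 span1 (oner_neq0 K) _ kE).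
  by rewrite oppr_eq0 oner_eq0.
rewrite sub_capmx capmxSr andbT; exact: (capmx_annmx_sub char0 (span_dhomog span3) f2_hom kE).
Qed.

Lemma adds_annmx_sub_adds3 : (A3 <= A1 + A2)%MS ->
  (A1 + A2 <= A3 + A1)%MS /\ (A2 + A1 <= A3 + A2)%MS.
Proof.
move=> A3_sub; split.
  have sub : (A3 + A1 <= A1 + A2)%MS by rewrite addsmx_sub A3_sub addsmxSl.
  by rewrite -(mxrank_leqif_sup sub).2 mxrank_adds31 mxrank_adds12.
have sub : (A3 + A2 <= A1 + A2)%MS by rewrite addsmx_sub A3_sub addsmxSr.
by rewrite addsmxC -(mxrank_leqif_sup sub).2 mxrank_adds32 mxrank_adds12.
Qed.

Lemma coplanar_square_pencil :
  (A3 <= A1 + A2)%MS -> common_binary_support f1 f2 \/ square_pencil f1 f2.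
Proof.
move=> /adds_annmx_sub_adds3 [sub31 sub32].
have rH : (n - 1 <= \rank (A1 + A2))%N by rewrite mxrank_adds12.
have [l [r [lr lH]]] := kermx_sub_of_codim (k := 1) (ltnW (ltnW n3)) rH.
have lH' : (kermx l^T <= A2 + A1)%MS by rewrite addsmxC.
have kE12 : f1 + f2 = 1 *: f1 + 1 *: f2 by rewrite !scale1r.
have kE21 : f1 + f2 = 1 *: f2 + 1 *: f1 by rewrite !scale1r addrC.
have [y1 [y1_hom f1E]] :=
  kermx_sub_sq_factor char0 f1_hom f2_hom (oner_neq0 K) kE12 lr lH sub31.
have [y2 [y2_hom f2E]] :=
  kermx_sub_sq_factor char0 f2_hom f1_hom (oner_neq0 K) kE21 lr lH' sub32.
have f_indep' := f_indep; rewrite f1E f2E in f_indep'.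
rewrite /common_binary_support /square_pencil f1E f2E.
have [xy_indep | [y_indep y_sym]] := square_pencil_cases f_indep'.
  by right; exists (lform l), y1, y2; split; rewrite ?lform_dhomog.
by left; exists y1, y2.
Qed.

Lemma annmx_add_sub_adds : (A3 <= A1 + A2)%MS.
Proof.
apply/negPn/negP => A3_nsub.
have full : row_full (A1 + A2 + A3).
  have : (\rank (A1 + A2) < \rank (A1 + A2 + A3))%N.
    by apply: rank_ltmx; rewrite ltmxE addsmxSl addsmx_sub submx_refl.
  rewrite /row_full mxrank_adds12; have := rank_leq_col (A1 + A2 + A3)%MS.
  by move: n3; lia.
have A4_sub : (A4 <= A1 :&: A2)%MS.
  apply/rV_subP => w /(annmxP char0 (span_dhomog span4)).
  rewrite linearB /= => /eqP; rewrite subr_eq0 => /eqP D12.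
  have D1 := dderiv_eq_eq0_full char0 f1_hom f2_hom full D12.
  by rewrite sub_capmx; apply/andP; split; apply/(annmxP char0); rewrite // -D12.
by have := mxrankS A4_sub; have := mxrank_annmx_span span4; move: rE n3; lia.
Qed.

End SmallCommonAnnihilator.

Lemma pencil_classification : common_binary_support f1 f2 \/ square_pencil f1 f2.
Proof.
have [rE|rE] := leqP (n - 2) (\rank (A1 :&: A2)); first by left; exact: common_binary_of_mxrank.
have {}rE : (\rank (A1 :&: A2) <= n - 3)%N by move: rE n3; lia.
exact/coplanar_square_pencil/annmx_add_sub_adds.
Qed.

End Pencil.

Theorem lemma2p4 (K : closedFieldType) (n : nat) (f1 f2 : {mpoly K[n]}) :
  [pchar K] =i pred0 ->
  (3 <= n)%N ->
  f1 \is 3.-homog -> f2 \is 3.-homog ->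
  lin_indep2 f1 f2 ->
  (forall f, in_span2 f1 f2 f ->
     exists x y : {mpoly K[n]}, [/\ x \is 1.-homog, y \is 1.-homog & in_sym3 x y f]) ->
  (exists x y : {mpoly K[n]},
     [/\ x \is 1.-homog, y \is 1.-homog, lin_indep2 x y &
         forall f, in_span2 f1 f2 f -> in_sym3 x y f])
  \/
  (exists x y z : {mpoly K[n]},
     [/\ x \is 1.-homog, y \is 1.-homog, z \is 1.-homog, lin_indep3 x y z &
         forall f, in_span2 f1 f2 f <-> in_span2 (x ^+ 2 * y) (x ^+ 2 * z) f]).
Proof. exact: pencil_classification. Qed.
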